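(* Let $X$ be a paracompact Hausdorff space. Then the following are equivalent: (1) $X$ is Hurewicz; (2) $X$ is set strongly star Hurewicz; (3) $X$ is strongly star Hurewicz; (4) $X$ is set star Hurewicz; (5) $X$ is star Hurewicz.
   Context: For a subset $A$ of a space $X$ and a collection $\mathcal{U}$ of subsets of $X$, ${\rm St}(A,\mathcal{U}) = \bigcup\{U \in \mathcal{U}: U \cap A \neq \emptyset\}$. A space $X$ is Hurewicz if for each sequence $(\mathcal{U}_n: n \in \mathbb{N})$ of open covers of $X$ there are finite $\mathcal{V}_n \subset \mathcal{U}_n$ such that each $x \in X$ lies in $\bigcup\mathcal{V}_n$ for all but finitely many $n$. $X$ is star Hurewicz if for each sequence $(\mathcal{U}_n)$ of open covers of $X$ there are finite $\mathcal{V}_n \subset \mathcal{U}_n$ such that each $x\in X$ lies in ${\rm St}(\bigcup\mathcal{V}_n,\mathcal{U}_n)$ for all but finitely many $n$. $X$ is strongly star Hurewicz if for each sequence $(\mathcal{U}_n)$ of open covers of $X$ there are finite sets $F_n \subset X$ such that each $x \in X$ lies in ${\rm St}(F_n,\mathcal{U}_n)$ for all but finitely many $n$. $X$ is set star Hurewicz if for each nonempty $A \subset X$ and each sequence $(\mathcal{U}_n: n\in\mathbb{N})$ of collections of sets open in $X$ with $\overline{A} \subset \bigcup\mathcal{U}_n$ for all $n$, there are finite $\mathcal{V}_n \subset \mathcal{U}_n$ such that each $x \in A$ lies in ${\rm St}(\bigcup\mathcal{V}_n,\mathcal{U}_n)$ for all but finitely many $n$. $X$ is set strongly star Hurewicz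 if for each nonempty $A \subset X$ and each such sequence $(\mathcal{U}_n)$ there are finite sets $F_n \subset \overline{A}$ such that each $x \in A$ lies in ${\rm St}(F_n,\mathcal{U}_n)$ for all but finitely many $n$. *)

From mathcomp Require Import all_boot all_order.
From mathcomp Require Import all_classical all_reals all_analysis.
Set Implicit Arguments. Unset Strict Implicit. Unset Printing Implicit Defensive.
Local Open Scope classical_set_scope.

Section Defs.
Context {X : topologicalType}.

Definition open_family (U : set (set X)) := forall V, U V -> open V.
Definition covers (U : set (set X)) (B : set X) := forall x, B x -> exists2 V, U V & V x.
Definition open_cover (U : set (set X)) := open_family U /\ covers U setT.

Definition Union (U : set (set X)) : set X := [set x | exists2 V, U V & V x].

Definition St (A : set X) (U : set (set X)) : set X :=
  [set x | exists2 V, U V & V x /\ V `&` A !=set0].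

Definition eventually_nat (P : nat -> Prop) := exists N, forall n, (N <= n)%N -> P n.

Definition locally_finite (W : set (set X)) :=
  forall x : X, exists2 N, nbhs x N & finite_set [set V | W V /\ V `&` N !=set0].

Definition refines (W U : set (set X)) := forall V, W V -> exists2 V', U V' & V `<=` V'.

Definition paracompact :=
  forall U, open_cover U ->
    exists W, [/\ open_cover W, refines W U & locally_finite W].

Definition hurewicz :=
  forall U : nat -> set (set X), (forall n, open_cover (U n)) ->
    exists Vs : nat -> set (set X),
      (forall n, finite_set (Vs n) /\ Vs n `<=` U n) /\
      forall x, eventually_nat (fun n => Union (Vs n) x).

Definition star_hurewicz :=
  forall U : nat -> set (set X), (forall n, open_cover (U n)) ->
    exists Vs : nat -> set (set X),
      (forall n, finite_set (Vs n) /\ Vs n `<=` U n) /\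
      forall x, eventually_nat (fun n => St (Union (Vs n)) (U n) x).

Definition strongly_star_hurewicz :=
  forall U : nat -> set (set X), (forall n, open_cover (U n)) ->
    exists F : nat -> set X,
      (forall n, finite_set (F n)) /\
      forall x, eventually_nat (fun n => St (F n) (U n) x).

Definition set_star_hurewicz :=
  forall (A : set X) (U : nat -> set (set X)), A !=set0 ->
    (forall n, open_family (U n) /\ covers (U n) (closure A)) ->
    exists Vs : nat -> set (set X),
      (forall n, finite_set (Vs n) /\ Vs n `<=` U n) /\
      forall x, A x -> eventually_nat (fun n => St (Union (Vs n)) (U n) x).

Definition set_strongly_star_hurewicz :=
  forall (A : set X) (U : nat -> set (set X)), A !=set0 ->
    (forall n, open_family (U n) /\ covers (U n) (closure A)) ->
    exists F : nat -> set X,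
      (forall n, finite_set (F n) /\ F n `<=` closure A) /\
      forall x, A x -> eventually_nat (fun n => St (F n) (U n) x).

End Defs.
Arguments paracompact : clear implicits.
Arguments hurewicz : clear implicits.
Arguments star_hurewicz : clear implicits.
Arguments strongly_star_hurewicz : clear implicits.
Arguments set_star_hurewicz : clear implicits.
Arguments set_strongly_star_hurewicz : clear implicits.

From mathcomp Require Import all_boot all_order.
From mathcomp Require Import all_classical all_reals all_analysis.
Set Implicit Arguments. Unset Strict Implicit. Unset Printing Implicit Defensive.
Local Open Scope classical_set_scope.

(* The implications
     Hurewicz -> set strongly star Hurewicz -> strongly star Hurewicz -> star Hurewicz,
     set strongly star Hurewicz -> set star Hurewicz -> star Hurewicz
   hold in every space (section StarVariants).  For the first one, enlarge
   each family by the open set X \ cl(A), apply Hurewicz, and pick a point of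
   cl(A) in each chosen member meeting cl(A); finite sets of points are turned
   into finite subfamilies by choosing a member through each point
   (points_to_members); the "set" variants specialise to A = X.

   The only implication needing the hypotheses is star Hurewicz -> Hurewicz
   (section ParacompactHausdorff).  It rests on the classical fact that every
   open cover of a paracompact Hausdorff space has an open star refinement:
   such a space is regular, so every open cover has a locally finite open
   refinement whose closures still refine it; from it we build a point-star
   refinement, and a point-star refinement of a point-star refinement is a
   star refinement.  Applying star Hurewicz to star refinements of the U n,
   the star of each chosen member lies in one member of U n. *)

Lemma near_all_finite (T : Type) (F : set_system T) (I : choiceType) (S : set I)
    (P : I -> T -> Prop) : Filter F -> finite_set S ->
  (forall i, S i -> \forall z \near F, P i z) ->
  \forall z \near F, forall i, S i -> P i z.
Proof.
move=> FF /finite_fsetP [D ->] evP.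
apply: filterS (filter_bigI (D := D) (f := fun i => [set z | P i z]) FF _).
  by move=> z Pz i Di; exact: (Pz i Di).
by move=> i Di; exact: evP.
Qed.

Section StarVariants.
Variable X : topologicalType.

Lemma St_subl (F G : set X) (U : set (set X)) : F `<=` G -> St F U `<=` St G U.
Proof.
move=> FG x [V UV [Vx [p [Vp Fp]]]]; exists V => //; split => //.
by exists p; split => //; exact: FG.
Qed.

(* Finite sets of points of B can be traded for finite subfamilies of covers
   of B: pick for every point a member containing it; the star around the
   union of these members contains the star around the points. *)
Lemma points_to_members (U : nat -> set (set X)) (B : set X) (F : nat -> set X) :
  (forall n, covers (U n) B) -> (forall n, finite_set (F n) /\ F n `<=` B) ->
  exists Vs : nat -> set (set X), forall n,
    [/\ finite_set (Vs n), Vs n `<=` U n & St (F n) (U n) `<=` St (Union (Vs n)) (U n)].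
Proof.
move=> UB FB.
have /choice [g gP] :
    forall n, exists h : X -> set X, forall p, B p -> U n (h p) /\ h p p.
  move=> n; have /choice [h hP] : forall p, exists V, B p -> U n V /\ V p.
    move=> p; have [Bp|nBp] := pselect (B p); last by exists set0.
    by have [V UV Vp] := UB n p Bp; exists V.
  by exists h.
exists (fun n => g n @` F n) => n; split.
- exact: finite_image (FB n).1.
- by move=> _ [p Fp <-]; exact: (gP n p ((FB n).2 p Fp)).1.
- apply: St_subl => p Fp.
  by exists (g n p); [exists p | exact: (gP n p ((FB n).2 p Fp)).2].
Qed.

Lemma add_closure_complement (U : set (set X)) (A : set X) :
  open_family U -> covers U (closure A) -> open_cover (U `|` [set ~` closure A]).
Proof.
move=> oU UA; split.
  move=> V [UV|->]; first exact: oU.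
  exact/closed_openC/closed_closure.
move=> x _; have [Ax|nAx] := pselect (closure A x).
  by have [V UV Vx] := UA x Ax; exists V => //; left.
by exists (~` closure A) => //; right.
Qed.

Lemma member_meeting_set (U : set (set X)) (A : set X) (V : set X) (x : X) :
  (U `|` [set ~` closure A]) V -> V x -> A x -> U V.
Proof.
case=> // -> nAx Ax; exfalso; apply: nAx; exact: subset_closure.
Qed.

(* Hurewicz implies set strongly star Hurewicz: apply Hurewicz to the covers
   U n `|` [set X \ cl(A)] and pick a point of cl(A) in each chosen member
   meeting cl(A). *)
Lemma hurewicz_set_strongly_star : hurewicz X -> set_strongly_star_hurewicz X.
Proof.
move=> hurX A U [a Aa] oU.
pose W n := U n `|` [set ~` closure A].
have [Vs [finVs hevVs]] := hurX W (fun n => add_closure_complement (oU n).1 (oU n).2).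
have /choice [f fP] :
    forall V : set X, exists p, V `&` closure A !=set0 -> (V `&` closure A) p.
  move=> V; have [[p Vp]|nV] := pselect (V `&` closure A !=set0).
    by exists p.
  by exists a => /nV.
exists (fun n => f @` [set V | Vs n V /\ V `&` closure A !=set0]); split.
  move=> n; split.
    by apply/finite_image/(sub_finite_set _ (finVs n).1) => V [].
  by move=> _ [V [_ VA] <-]; exact: (fP V VA).2.
move=> x Ax; have [N evN] := hevVs x; exists N => n Nn.
have [V VsV Vx] := evN n Nn.
have VA : V `&` closure A !=set0 by exists x; split => //; exact: subset_closure.
exists V; first exact: member_meeting_set ((finVs n).2 V VsV) Vx Ax.
split => //; exists (f V); split; first exact: (fP V VA).1.
by exists V.
Qed.

Lemma set_strongly_star_set_star :
  set_strongly_star_hurewicz X -> set_star_hurewicz X.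
Proof.
move=> ssshX A U A0 oU.
have [F [finF evF]] := ssshX A U A0 oU.
have [Vs VsP] := points_to_members (fun n => (oU n).2) finF.
exists Vs; split; first by move=> n; have [] := VsP n.
move=> x Ax; have [N evN] := evF x Ax; exists N => n Nn.
by have [_ _] := VsP n; apply; exact: evN.
Qed.

Lemma strongly_star_star : strongly_star_hurewicz X -> star_hurewicz X.
Proof.
move=> sshX U oU.
have [F [finF evF]] := sshX U oU.
have FT n : finite_set (F n) /\ F n `<=` setT by split; [exact: finF | exact: subsetT].
have [Vs VsP] := points_to_members (fun n => (oU n).2) FT.
exists Vs; split; first by move=> n; have [] := VsP n.
move=> x; have [N evN] := evF x; exists N => n Nn.
by have [_ _] := VsP n; apply; exact: evN.
Qed.

Lemma open_cover_closureT (U : set (set X)) :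
  open_cover U -> open_family U /\ covers U (closure setT).
Proof. by case=> oU UT; rewrite closureT. Qed.

(* The "set" variants specialise to the plain ones by taking A = X (when X is
   empty, every property holds trivially). *)
Lemma set_strongly_star_strongly_star :
  set_strongly_star_hurewicz X -> strongly_star_hurewicz X.
Proof.
move=> ssshX U oU.
have [[a _]|X0] := pselect ([set: X] !=set0); last first.
  by exists (fun=> set0); split => // x; exfalso; apply: X0; exists x.
have [F [finF evF]] :=
  ssshX setT U (ex_intro _ a I) (fun n => open_cover_closureT (oU n)).
by exists F; split => [n|x]; [exact: (finF n).1 | exact: evF].
Qed.

Lemma set_star_star : set_star_hurewicz X -> star_hurewicz X.
Proof.
move=> sshX U oU.
have [[a _]|X0] := pselect ([set: X] !=set0); last first.
  exists (fun=> set0); split => [n|x]; first by split => //; exact: sub0set.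
  by exfalso; apply: X0; exists x.
have [Vs [finVs evVs]] :=
  sshX setT U (ex_intro _ a I) (fun n => open_cover_closureT (oU n)).
by exists Vs; split => // x; exact: evVs.
Qed.

End StarVariants.

Section LocallyFinite.
Variable X : topologicalType.

Lemma not_closure_near (V : set X) (x : X) :
  ~ closure V x -> \forall z \near x, ~ closure V z.
Proof.
move=> nVx; apply: open_nbhs_nbhs; split => //.
exact/closed_openC/closed_closure.
Qed.

Variable W : set (set X).
Hypothesis lfW : locally_finite W.

Lemma locally_finite_closure_finite (x : X) :
  finite_set [set V | W V /\ closure V x].
Proof.
have [N Nx finN] := lfW x.
by apply: sub_finite_set finN => V [WV Vx]; split => //; exact: Vx N Nx.
Qed.

Lemma locally_finite_closure_near (x : X) :
  \forall z \near x, forall V, W V -> closure V z -> closure V x.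
Proof.
have [N Nx finN] := lfW x.
have farN : \forall z \near x, forall V, [set V | W V /\ V `&` N !=set0] V ->
    ~ closure V x -> ~ closure V z.
  apply: near_all_finite => // V _.
  have [Vx|nVx] := pselect (closure V x); first by apply: filterE => z /(_ Vx).
  by apply: filterS (not_closure_near nVx) => z nVz _.
have nearN : \forall z \near x, nbhs z N := nbhs_interior Nx.
apply: filterS2 farN nearN => z zfar zN V WV Vz.
apply: contrapT => nVx; apply: (zfar V) => //; split => //.
exact: Vz N zN.
Qed.

End LocallyFinite.

Section ParacompactHausdorff.
Variable X : topologicalType.
Hypothesis pcX : paracompact X.
Hypothesis hsX : hausdorff_space X.

Lemma hausdorff_separate (x y : X) : y <> x ->
  exists O, [/\ open O, O y & ~ closure O x].
Proof.
move=> yx.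
have [A [B [Ay Bx AB]]] :
    exists A B, [/\ nbhs y A, nbhs x B & ~ (A `&` B !=set0)].
  apply: contrapT => nAB; apply: yx; apply: hsX => A B Ay Bx.
  by apply: contrapT => AB; apply: nAB; exists A, B.
exists A°; split; [exact: open_interior | exact: Ay |].
move=> /(_ B Bx) [z [Az Bz]]; apply: AB; exists z; split => //.
exact: interior_subset.
Qed.

(* Paracompact Hausdorff spaces are regular: refine the cover {U} plus all
   open sets whose closure misses x by a locally finite open cover W; the
   members of W whose closure misses x form an open set Bad avoiding a
   neighbourhood G of x, and every point outside Bad lies in U. *)
Lemma paracompact_regular (x : X) (U : set X) :
  open U -> U x -> exists G, [/\ open G, G x & closure G `<=` U].
Proof.
move=> oU Ux.
pose C := [set U] `|` [set O : set X | open O /\ ~ closure O x].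
have oC : open_cover C.
  split; first by move=> V [->|[]].
  move=> y _; have [Uy|nUy] := pselect (U y); first by exists U => //; left.
  have yx : y <> x by move=> yx; apply: nUy; rewrite yx.
  by have [G [oG Gy nGx]] := hausdorff_separate yx; exists G => //; right.
have [W [oW WC lfW]] := pcX oC.
pose Bad := [set z : X | exists2 V, W V & V z /\ ~ closure V x].
have nearBad : \forall z \near x, ~ Bad z.
  apply: filterS (locally_finite_closure_near lfW x) => z zW [V WV [Vz nVx]].
  by apply/nVx/(zW V WV); exact: subset_closure.
have oBad : open Bad.
  rewrite openE => z [V WV [Vz nVx]].
  have : nbhs z V by apply: open_nbhs_nbhs; split => //; exact: oW.1.
  by apply: filterS => w Vw; exists V.
exists (~` Bad)°; split; [exact: open_interior | exact: nearBad |].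
have cBad : closed (~` Bad) by exact: open_closedC.
move=> z /(closureS (@interior_subset _ _)).
rewrite -(proj1 (closure_id _) cBad) => nBz.
apply: contrapT => nUz.
have [V WV Vz] := oW.2 z I.
have [V' CV' VV'] := WC V WV.
case: CV' => [eV'|[_ nV'x]]; first by apply: nUz; rewrite -eV'; exact: VV'.
apply: nBz; exists V => //; split => //.
by move=> Vx; apply: nV'x; exact: (closureS VV').
Qed.

Lemma closure_refinement (U : set (set X)) : open_cover U ->
  exists H : set (set X), exists f : set X -> set X,
    [/\ open_cover H, locally_finite H &
        forall Hs, H Hs -> U (f Hs) /\ closure Hs `<=` f Hs].
Proof.
move=> oU.
pose C := [set G : set X | open G /\ exists2 U0, U U0 & closure G `<=` U0].
have oC : open_cover C.
  split; first by move=> ? [].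
  move=> x _; have [U0 UU0 U0x] := oU.2 x I.
  have [G [oG Gx cGU0]] := paracompact_regular (oU.1 _ UU0) U0x.
  by exists G => //; split => //; exists U0.
have [H [oH HC lfH]] := pcX oC.
have /choice [f fP] :
    forall Hs : set X, exists U0, H Hs -> U U0 /\ closure Hs `<=` U0.
  move=> Hs; have [HHs|nHs] := pselect (H Hs); last by exists set0.
  have [G [_ [U0 UU0 cGU0]] HsG] := HC Hs HHs.
  by exists U0 => _; split => //; exact: subset_trans (closureS HsG) cGU0.
by exists H, f; split.
Qed.

Section PointStar.
Variables (U H : set (set X)) (f : set X -> set X).
Hypotheses (oU : open_cover U) (oH : open_cover H) (lfH : locally_finite H).
Hypothesis fP : forall Hs, H Hs -> U (f Hs) /\ closure Hs `<=` f Hs.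

Definition star_nbhd (x : X) : set X :=
  [set z | (forall Hs, H Hs -> closure Hs x -> f Hs z) /\
           (forall Hs, H Hs -> closure Hs z -> closure Hs x)].

Lemma star_nbhd_center (x : X) : star_nbhd x x.
Proof. by split => // Hs HHs; exact: (fP HHs).2. Qed.

(* Both conditions defining star_nbhd x are open: the first is a finite
   intersection of open sets by local finiteness, the second holds near any
   of its points by upper semicontinuity of closures. *)
Lemma open_star_nbhd (x : X) : open (star_nbhd x).
Proof.
rewrite openE => z [zf zcl].
have in_f : \forall w \near z, forall Hs, [set Hs | H Hs /\ closure Hs x] Hs ->
    f Hs w.
  apply: near_all_finite; first exact: locally_finite_closure_finite.
  move=> Hs [HHs Hsx]; apply: open_nbhs_nbhs; split; last exact: zf.
  exact: oU.1 _ (fP HHs).1.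
apply: filterS2 in_f (locally_finite_closure_near lfH z) => w wf wcl; split.
  by move=> Hs HHs Hsx; exact: wf.
by move=> Hs HHs Hsw; apply: zcl => //; exact: wcl.
Qed.

(* Point-star property: all neighbourhoods star_nbhd x through y lie in the
   single member f H0 of U, where H0 is a member of H containing y. *)
Lemma star_nbhd_point_star (y : X) :
  exists2 U0, U U0 & forall x, star_nbhd x y -> star_nbhd x `<=` U0.
Proof.
have [H0 HH0 H0y] := oH.2 y I.
exists (f H0); first exact: (fP HH0).1.
move=> x [_ ycl] z [zf _]; apply: zf => //.
by apply: ycl => //; exact: subset_closure.
Qed.

End PointStar.

Lemma point_star_refinement (U : set (set X)) :
  open_cover U -> exists V : set (set X), open_cover V /\
    forall y, exists2 U0, U U0 & forall V', V V' -> V' y -> V' `<=` U0.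
Proof.
move=> oU.
have [H [f [oH lfH fP]]] := closure_refinement oU.
exists (star_nbhd H f @` setT); split; first split.
- by move=> _ [x _ <-]; exact: (open_star_nbhd oU lfH fP).
- by move=> x _; exists (star_nbhd H f x); [exists x | exact: (star_nbhd_center fP)].
move=> y; have [U0 UU0 U0P] := star_nbhd_point_star oH fP y.
by exists U0 => // _ [x _ <-]; exact: U0P.
Qed.

(* A point-star refinement of a point-star refinement is a star refinement:
   the star of a nonempty W is the point-star at any y of W in the first
   refinement. *)
Lemma star_refinement (U : set (set X)) :
  open_cover U -> exists V : set (set X), open_cover V /\
    forall W, V W -> W !=set0 -> exists2 U0, U U0 & St W V `<=` U0.
Proof.
move=> oU.
have [V1 [oV1 V1P]] := point_star_refinement oU.
have [V2 [oV2 V2P]] := point_star_refinement oV1.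
exists V2; split => // W V2W [y Wy].
have [U0 UU0 U0P] := V1P y.
exists U0 => // z [V' V2V' [V'z [p [V'p Wp]]]].
have [A V1A AP] := V2P p.
apply: (U0P A V1A (AP W V2W Wp y Wy)).
exact: (AP V' V2V' V'p z V'z).
Qed.

(* Star Hurewicz implies Hurewicz: apply star Hurewicz to star refinements
   V n of U n, and replace each chosen nonempty member W of V n by a member of
   U n containing its star. *)
Lemma star_hurewicz_hurewicz : star_hurewicz X -> hurewicz X.
Proof.
move=> shX U oU.
have /choice [V VP] := fun n => star_refinement (oU n).
have [Ws [finWs evWs]] := shX V (fun n => (VP n).1).
have /choice [g gP] : forall n, exists g : set X -> set X,
    forall W, V n W -> W !=set0 -> U n (g W) /\ St W (V n) `<=` g W.
  move=> n; have /choice [g gP] : forall W, exists U0,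
      V n W -> W !=set0 -> U n U0 /\ St W (V n) `<=` U0.
    move=> W; have [[VW W0]|nW] := pselect (V n W /\ W !=set0).
      by have [U0 UU0 U0P] := (VP n).2 W VW W0; exists U0.
    by exists set0 => VW W0; exfalso; apply: nW.
  by exists g.
exists (fun n => g n @` [set W | Ws n W /\ W !=set0]); split.
  move=> n; split; first by apply/finite_image/(sub_finite_set _ (finWs n).1) => W [].
  by move=> _ [W [WsW W0] <-]; exact: (gP n W ((finWs n).2 W WsW) W0).1.
move=> x; have [N evN] := evWs x; exists N => n Nn.
have [V' VV' [V'x [p [V'p [W WsW Wp]]]]] := evN n Nn.
have W0 : W !=set0 by exists p.
exists (g n W); first by exists W.
apply: (gP n W ((finWs n).2 W WsW) W0).2.
by exists V' => //; split => //; exists p.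
Qed.

End ParacompactHausdorff.

Theorem theorem2p6 (X : topologicalType) :
  paracompact X -> hausdorff_space X ->
  [/\ (hurewicz X <-> set_strongly_star_hurewicz X),
      (hurewicz X <-> strongly_star_hurewicz X),
      (hurewicz X <-> set_star_hurewicz X) &
      (hurewicz X <-> star_hurewicz X)].
Proof.
move=> pcX hsX.
have star_hur := star_hurewicz_hurewicz pcX hsX.
split; split => hX.
- exact: hurewicz_set_strongly_star.
- exact/star_hur/strongly_star_star/set_strongly_star_strongly_star.
- exact/set_strongly_star_strongly_star/hurewicz_set_strongly_star.
- exact/star_hur/strongly_star_star.
- exact/set_strongly_star_set_star/hurewicz_set_strongly_star.
- exact/star_hur/set_star_star.
- exact/strongly_star_star/set_strongly_star_strongly_star/hurewicz_set_strongly_star.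
- exact: star_hur.
Qed.
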